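(* Let $L$ be a positive integer and let $\{a_i(k)\}_{i\in\mathbb Z_L}$, $k\in\mathcal K=\mathbb Z_L$, be binary sequences. Let $2\le s\le S$ be integers and $W(s)\ge0$ such that for all distinct keys $k_1,\ldots,k_s\in\mathcal K$ and all bits $b_1,\ldots,b_s$, $|A_{b_1\ldots b_s}(k_1,\ldots,k_s)|\le L/2^s+W(s)$. Let $0<\gamma<1$ with $\gamma L$ an integer, $L'=L+2^sW(s)$, $\gamma'=\gamma L/L'$. Let $\nu^*_{\rm correct}$ be the optimal value of the linear program in the variables $\nu_0,\ldots,\nu_S\ge0$ subject to $\nu_t=\nu_{S-t}$ for all $t$: $$\text{maximize } \sum_{t=0}^{\lfloor S/2\rfloor}\binom{S-1}{t}\nu_t+\sum_{t=\lfloor S/2\rfloor+1}^{S}\binom{S-1}{t-1}\nu_t$$ $$\text{subject to } \sum_{t=0}^{S}\binom{S}{t}\nu_t=\gamma',\qquad \sum_{t=0}^{S-s}\binom{S-s}{t}\nu_{h+t}\le 2^{-s}\ \ (h=0,\ldots,s).$$ Then for every $T\subset\mathbb Z_L$ with $|T|=\gamma L$, every $g:T\to\{0,1\}$ and every $S$ distinct keys $k_1,\ldots,k_S$, $$\min_{1\le i\le S}\bigl|\{j\in T: g(j)=a_j(k_i)\}\bigr|\le n_{\rm correct}(\gamma,\varepsilon):=\nu^*_{\rm correct}L',$$ with $\varepsilon=S/|\mathcal K|$. Consequently, fewer than $S$ keys $k$ satisfy $|\{j\in T:g(j)=a_j(k)\}|>\nu^*_{\rm correct}L'$, so for a uniformly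 random key the number of correctly guessed bits does not exceed $\nu^*_{\rm correct}L'$ with probability at least $1-\varepsilon$.
   Context: $\mathbb Z_L=\{0,\ldots,L-1\}$ is the residue ring modulo $L$. For distinct keys $k_1,\ldots,k_s$ and bits $b_1,\ldots,b_s$, $A_{b_1\ldots b_s}(k_1,\ldots,k_s)=\{i\in\mathbb Z_L: a_i(k_1)=b_1,\ldots,a_i(k_s)=b_s\}$. *)

From HB Require Import structures.
From mathcomp Require Import all_boot all_order all_algebra.
Set Implicit Arguments. Unset Strict Implicit. Unset Printing Implicit Defensive.
Import Order.TTheory GRing.Theory Num.Theory.
Local Open Scope ring_scope.

(* Binary sequences a_i(k): [a k i] is the bit a_i(k), keys and indices in Z_L = 'I_L. *)

Definition Aset (L s : nat) (a : 'I_L -> 'I_L -> bool)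
  (ks : 'I_s -> 'I_L) (b : 'I_s -> bool) : {set 'I_L} :=
  [set i : 'I_L | [forall j : 'I_s, a (ks j) i == b j]].

Definition ncorrect (L : nat) (a : 'I_L -> 'I_L -> bool) (T : {set 'I_L})
  (g : 'I_L -> bool) (k : 'I_L) : nat :=
  #|[set j in T | g j == a k j]|.

Definition lp_obj (R : numDomainType) (S : nat) (nu : nat -> R) : R :=
  \sum_(0 <= t < (S./2).+1) ('C(S.-1, t))%:R * nu t
  + \sum_((S./2).+1 <= t < S.+1) ('C(S.-1, t.-1))%:R * nu t.

(* LP feasibility (variables nu_0..nu_S; values at indices > S are irrelevant) *)
Definition lp_feasible (R : numFieldType) (S s : nat) (gamma' : R) (nu : nat -> R) : Prop :=
  [/\ (forall t, (t <= S)%N -> 0 <= nu t),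
      (forall t, (t <= S)%N -> nu t = nu (S - t)%N),
      \sum_(0 <= t < S.+1) ('C(S, t))%:R * nu t = gamma' &
      (forall h, (h <= s)%N ->
         \sum_(0 <= t < (S - s).+1) ('C(S - s, t))%:R * nu (h + t)%N <= 1 / 2 ^+ s)].

Definition lp_optimal (R : numFieldType) (S s : nat) (gamma' : R) (nustar : R) : Prop :=
  (exists nu, lp_feasible S s gamma' nu /\ lp_obj S nu = nustar) /\
  (forall nu, lp_feasible S s gamma' nu -> lp_obj S nu <= nustar).

(* Fix S distinct keys and let w_j be the number of them whose bit at position j is 1.
   Spreading the symmetrised distribution of the w_j, j in T, evenly over the key sets of
   each size gives a feasible point of the linear program: its total mass is |T| / L', and
   its h-th packing constraint is a double count of the s-sets of keys carrying exactly h
   ones at a position, which the bound on |A_{b_1..b_s}| controls.  At this point the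
   objective equals (S L')^-1 sum_{j in T} max(w_j, S - w_j), while at position j a guess
   agrees with at most max(w_j, S - w_j) of the keys.  So the average, hence the minimum,
   number of correct guesses over the S keys is at most nu* L'; and S keys each exceeding
   nu* L' would contradict this. *)

From HB Require Import structures.
From mathcomp Require Import all_boot all_order all_algebra.
From mathcomp Require Import ring zify.
Import Order.TTheory GRing.Theory Num.Theory.
Set Implicit Arguments. Unset Strict Implicit. Unset Printing Implicit Defensive.
Local Open Scope ring_scope.

Lemma mul_bin_sub (n m k : nat) : (k <= m)%N -> (m <= n)%N ->
  ('C(n, m) * 'C(m, k) = 'C(n, k) * 'C(n - k, m - k))%N.
Proof.
move=> le_km le_mn; have le_kn := leq_trans le_km le_mn.
have facts_gt0 : (0 < k`! * (m - k)`! * (n - m)`!)%N by rewrite !muln_gt0 !fact_gt0.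
apply/eqP; rewrite -(eqn_pmul2r facts_gt0); apply/eqP.
have := bin_fact (leq_sub2r k le_mn); rewrite (_ : n - k - (m - k) = n - m)%N; last lia.
move=> fact_nk; transitivity n`!.
  by rewrite -(bin_fact le_mn) -(bin_fact le_km); ring.
by rewrite -(bin_fact le_kn) -fact_nk; ring.
Qed.

Lemma mul_bin_subC (n a b : nat) : (b + a <= n)%N ->
  ('C(n, a) * 'C(n - a, b) = 'C(n, b) * 'C(n - b, a))%N.
Proof.
move=> le_ban.
have := mul_bin_sub (leq_addl b a) le_ban; rewrite addnK => <-.
have := mul_bin_sub (leq_addr a b) le_ban; rewrite addKn => <-.
by congr (_ * _)%N; rewrite -[LHS]bin_sub ?leq_addl // addnK.
Qed.

(* Both sides count the pairs of an s-subset and an x-subset of an S-set meeting in h points. *)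
Lemma mul_bin_shift (S s h x : nat) :
  (h <= s)%N -> (s <= S)%N -> (h <= x)%N -> (x - h <= S - s)%N ->
  ('C(S - s, x - h) * ('C(S, s) * 'C(s, h)) = 'C(x, h) * 'C(S - x, s - h) * 'C(S, x))%N.
Proof.
move=> le_hs le_sS le_hx le_xhSs; have le_xS : (x <= S)%N by lia.
have swap : ('C(S - h, s - h) * 'C(S - s, x - h) = 'C(S - h, x - h) * 'C(S - x, s - h))%N.
  have -> : (S - s = S - h - (s - h))%N by lia.
  have -> : (S - x = S - h - (x - h))%N by lia.
  by apply: mul_bin_subC; lia.
rewrite mul_bin_sub // [RHS]mulnC [RHS]mulnA [in RHS]mul_bin_sub //.
by rewrite -[RHS]mulnA -swap; ring.
Qed.

Lemma card_set_sum (T : finType) (p : pred T) : #|[set x | p x]| = (\sum_x p x)%N.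
Proof. by rewrite -sum1_card big_mkcond /=; apply: eq_bigr => x _; rewrite inE; case: (p x). Qed.

Lemma exchange_sum_card (I J : finType) (P : I -> J -> bool) :
  (\sum_i #|[set j | P i j]| = \sum_j #|[set i | P i j]|)%N.
Proof.
under eq_bigr do rewrite card_set_sum.
by rewrite exchange_big /=; apply: eq_bigr => j _; rewrite card_set_sum.
Qed.

Lemma split_setU (T : finType) (O A B : {set T}) : A \subset O -> B \subset ~: O ->
  (A :|: B) :&: O = A /\ (A :|: B) :\: O = B.
Proof.
move=> sub_AO; rewrite subsets_disjoint setCK => disj_BO.
have /eqP A_O0 : A :\: O == set0 by rewrite setD_eq0.
rewrite setIUl (setIidPl sub_AO) (disjoint_setI0 disj_BO) setU0.
by rewrite setDUl A_O0 (setDidPl disj_BO) set0U.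
Qed.

Lemma card_draws_meet (T : finType) (O : {set T}) (s h : nat) : (h <= s)%N ->
  #|[set I : {set T} | (#|I| == s) && (#|I :&: O| == h)]| =
  ('C(#|O|, h) * 'C(#|T| - #|O|, s - h))%N.
Proof.
move=> le_hs.
have -> : (#|T| - #|O| = #|~: O|)%N by rewrite -(cardsC O) addKn.
rewrite -!cards_draws -cardsX.
rewrite -(@card_in_imset _ _ (fun p => p.1 :|: p.2)).
  apply: eq_card => I; rewrite inE; apply/andP/imsetP.
    case=> /eqP card_I /eqP card_IO; exists (I :&: O, I :\: O); last by rewrite setID.
    by rewrite !inE /= subsetIr subsetDr card_IO -card_I -(cardsID O I) card_IO addKn !eqxx.
  case=> [[A B]]; rewrite !inE /= => /andP[/andP[AO /eqP card_A] /andP[BO /eqP card_B]] ->.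
  have [UO UCO] := split_setU AO BO.
  by rewrite -(cardsID O (A :|: B)) UO UCO card_A card_B subnKC // !eqxx.
move=> [A1 B1] [A2 B2]; rewrite !inE /= => /andP[/andP[AO1 _] /andP[BO1 _]].
move=> /andP[/andP[AO2 _] /andP[BO2 _]] /= eq_U.
have [UO1 UCO1] := split_setU AO1 BO1; have [UO2 UCO2] := split_setU AO2 BO2.
by congr (_, _); [rewrite -UO1 eq_U UO2 | rewrite -UCO1 eq_U UCO2].
Qed.

Section AgreementCount.
Variables (R : realFieldType) (L S s : nat) (a : 'I_L -> 'I_L -> bool).
Variables (ks : 'I_S -> 'I_L) (B : R).
Hypothesis ks_inj : injective ks.
Hypothesis card_Aset_le : forall (ks' : 'I_s -> 'I_L) (b : 'I_s -> bool),
  injective ks' -> (#|Aset a ks' b|)%:R <= B.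

Definition ones_at (j : 'I_L) : {set 'I_S} := [set i | a (ks i) j].

Lemma card_meet_ones_at_le (I : {set 'I_S}) (h : nat) : #|I| = s ->
  (#|[set j | #|I :&: ones_at j| == h]|)%:R <= 'C(s, h)%:R * B.
Proof.
move=> card_I.
pose sg (l : 'I_s) : 'I_S := enum_val (cast_ord (esym card_I) l).
have sg_inj : injective sg by move=> x y /enum_val_inj /cast_ord_inj.
have sgI l : sg l \in I by apply: enum_valP.
pose draws_I := [set J : {set 'I_S} | J \subset I & #|J| == h].
have -> : #|[set j | #|I :&: ones_at j| == h]| =
    (\sum_(J in draws_I) #|[set j | I :&: ones_at j == J]|)%N.
  rewrite card_set_sum; under [RHS]eq_bigr do rewrite card_set_sum.
  rewrite exchange_big /=; apply: eq_bigr => j _.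
  case: (boolP (#|I :&: ones_at j| == h)) => card_Ij.
    rewrite (bigD1 (I :&: ones_at j)) ?inE ?subsetIl //= eqxx big1 ?addn0 // => J /andP[_].
    by rewrite eq_sym => /negbTE ->.
  rewrite big1 // => J; rewrite inE => /andP[_ /eqP card_J].
  by case: eqP => // eq_IJ; move: card_Ij; rewrite eq_IJ card_J eqxx.
rewrite natr_sum mulr_natl -card_I -cards_draws -sumr_const.
apply: ler_sum => J _.
apply: le_trans (card_Aset_le (fun l => sg l \in J) (inj_comp ks_inj sg_inj)).
rewrite ler_nat; apply: subset_leq_card; apply/subsetP => j; rewrite !inE => /eqP <-.
by apply/forallP => l /=; rewrite !inE sgI.
Qed.

Lemma sum_bin_ones_at_le (T : {set 'I_L}) (h : nat) : (h <= s)%N ->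
  \sum_(j in T) ('C(#|ones_at j|, h) * 'C(S - #|ones_at j|, s - h))%:R
    <= ('C(S, s) * 'C(s, h))%:R * B.
Proof.
move=> le_hs.
apply: (@le_trans _ _ (\sum_j ('C(#|ones_at j|, h) * 'C(S - #|ones_at j|, s - h))%:R)).
  by rewrite [leLHS]big_mkcond /=; apply: ler_sum => j _; case: (j \in T).
have draws_meet j : ('C(#|ones_at j|, h) * 'C(S - #|ones_at j|, s - h) =
    #|[set I : {set 'I_S} | (#|I| == s) && (#|I :&: ones_at j| == h)]|)%N.
  by rewrite card_draws_meet // card_ord.
under eq_bigr do rewrite draws_meet.
rewrite -natr_sum exchange_sum_card natr_sum.
apply: (@le_trans _ _ (\sum_(I in [set I : {set 'I_S} | #|I| == s]) 'C(s, h)%:R * B)).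
  rewrite [leRHS]big_mkcond /=; apply: ler_sum => I _; rewrite inE.
  case: eqP => [card_I | _].
    apply: le_trans (card_meet_ones_at_le h card_I).
    by rewrite ler_nat subset_leq_card //; apply/subsetP => j; rewrite !inE.
  have -> : [set j | false & #|I :&: ones_at j| == h] = set0 by apply/setP => j; rewrite !inE.
  by rewrite cards0.
by rewrite sumr_const card_draws card_ord -[_ *+ _]mulr_natl mulrA -natrM.
Qed.

End AgreementCount.

Lemma sum_mul_delta (R : nzRingType) (n x : nat) (F : nat -> R) : (x <= n)%N ->
  \sum_(0 <= t < n.+1) F t * (x == t)%:R = F x.
Proof.
move=> le_xn; rewrite (bigD1_seq x) ?mem_index_iota ?iota_uniq //= eqxx mulr1.
by rewrite big1 ?addr0 // => t /negbTE; rewrite eq_sym => ->; rewrite mulr0.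
Qed.

Lemma sum_shift_mul_delta (R : numFieldType) (S s h x : nat) :
  (h <= s)%N -> (s <= S)%N -> (x <= S)%N ->
  \sum_(0 <= t < (S - s).+1) 'C(S - s, t)%:R / 'C(S, h + t)%:R * (x == (h + t)%N)%:R
  = ('C(x, h) * 'C(S - x, s - h))%:R / ('C(S, s) * 'C(s, h))%:R :> R.
Proof.
move=> le_hs le_sS le_xS.
have bin_neq0 n m : (m <= n)%N -> 'C(n, m)%:R != 0 :> R.
  by move=> le_mn; rewrite pnatr_eq0 -lt0n bin_gt0.
case: (boolP ((h <= x) && (x - h <= S - s))%N) => [/andP[le_hx le_xh] | out].
  rewrite (bigD1_seq (x - h)%N) ?mem_index_iota ?iota_uniq //=.
  rewrite (subnKC le_hx) eqxx mulr1.
  rewrite big1 ?addr0; last first.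
    move=> t /negbTE neq_t; case: eqP => [eq_x | _]; last by rewrite mulr0.
    by move: neq_t; rewrite eq_x addKn eqxx.
  apply/eqP; rewrite eqr_div ?bin_neq0 ?natrM ?mulf_neq0 ?bin_neq0 //; try lia.
  by rewrite -!natrM eqr_nat mul_bin_shift.
rewrite big_nat big1; last first.
  move=> t /andP[_ lt_t]; case: eqP => [eq_x | _]; last by rewrite mulr0.
  by move: out; rewrite eq_x leq_addr addKn -ltnS lt_t.
have [lt_xh | le_hx] := ltnP x h; first by rewrite bin_small // mul0n mul0r.
by rewrite (@bin_small (S - x)) ?muln0 ?mul0r //; move: out; rewrite le_hx /=; lia.
Qed.

Definition lp_coef (R : nzSemiRingType) (S t : nat) : R :=
  if (t <= S./2)%N then 'C(S.-1, t)%:R else 'C(S.-1, t.-1)%:R.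

Lemma lp_objE (R : numDomainType) (S : nat) (nu : nat -> R) :
  lp_obj S nu = \sum_(0 <= t < S.+1) lp_coef R S t * nu t.
Proof.
rewrite /lp_obj [RHS](@big_cat_nat _ _ _ (S./2).+1) //=; last by rewrite ltnS -divn2; lia.
congr (_ + _); apply: eq_big_nat => t /andP[lt_t1 lt_t2]; rewrite /lp_coef.
  by rewrite -ltnS lt_t2.
by rewrite leqNgt lt_t1.
Qed.

Lemma lp_coef_div_bin (R : numFieldType) (S t : nat) : (0 < S)%N -> (t <= S)%N ->
  lp_coef R S t / 'C(S, t)%:R = (maxn t (S - t))%:R / S%:R.
Proof.
move=> S_gt0 le_tS.
have bin_neq0 : 'C(S, t)%:R != 0 :> R by rewrite pnatr_eq0 -lt0n bin_gt0.
have S_neq0 : S%:R != 0 :> R by rewrite pnatr_eq0 -lt0n.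
rewrite /lp_coef -divn2; apply/eqP; case: ifP => le_t.
  rewrite (_ : maxn t (S - t) = S - t)%N; last lia.
  by rewrite eqr_div // -!natrM eqr_nat mulnC mul_bin_down.
rewrite (_ : maxn t (S - t) = t); last lia.
by rewrite eqr_div // -!natrM eqr_nat mulnC mul_bin_diag prednK //; lia.
Qed.

Section Profile.
Variables (R : numFieldType) (L S : nat) (T : {set 'I_L}) (w : 'I_L -> nat) (L' : R).

Definition profile_mass (x t : nat) : R := (x == t)%:R + ((S - x)%N == t)%:R.

Definition profile_nu (t : nat) : R :=
  (\sum_(j in T) profile_mass (w j) t) / (2 * 'C(S, t)%:R * L').

Lemma sum_profile_nu (r : seq nat) (c : nat -> R) (phi : nat -> nat) :
  \sum_(t <- r) c t * profile_nu (phi t) =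
  (2 * L')^-1 * \sum_(j in T) \sum_(t <- r) c t / 'C(S, phi t)%:R * profile_mass (w j) (phi t).
Proof.
rewrite /profile_nu; under eq_bigr do rewrite mulr_suml mulr_sumr.
rewrite exchange_big /= mulr_sumr; apply: eq_bigr => j _.
by rewrite mulr_sumr; apply: eq_bigr => t _; rewrite !invfM; ring.
Qed.

Hypothesis w_le : forall j, (w j <= S)%N.
Hypothesis L'_gt0 : 0 < L'.

Let bin_neq0 t : (t <= S)%N -> 'C(S, t)%:R != 0 :> R.
Proof. by move=> le_tS; rewrite pnatr_eq0 -lt0n bin_gt0. Qed.

Lemma profile_nu_ge0 t : 0 <= profile_nu t.
Proof.
rewrite divr_ge0 ?mulr_ge0 ?(ltW L'_gt0) //; apply: sumr_ge0 => j _; exact: addr_ge0.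
Qed.

Lemma profile_nu_sym t : (t <= S)%N -> profile_nu t = profile_nu (S - t).
Proof.
move=> le_tS; rewrite /profile_nu bin_sub //; congr (_ / _); apply: eq_bigr => j _.
have le_wS := w_le j.
rewrite /profile_mass addrC; congr (_%:R + _%:R); apply/eqP/eqP; lia.
Qed.

Lemma sum_bin_profile_nu :
  \sum_(0 <= t < S.+1) 'C(S, t)%:R * profile_nu t = #|T|%:R / L'.
Proof.
rewrite (sum_profile_nu _ _ id); under eq_bigr => j _.
  rewrite /profile_mass; under eq_bigr do rewrite mulrDr.
  rewrite big_split /= !sum_mul_delta ?leq_subr // !divff ?bin_neq0 ?leq_subr //.
  over.
by rewrite sumr_const -mulr_natl; field; rewrite lt0r_neq0.
Qed.

Lemma sum_shift_profile_nu (s h : nat) : (h <= s)%N -> (s <= S)%N ->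
  \sum_(0 <= t < (S - s).+1) 'C(S - s, t)%:R * profile_nu (h + t) =
  (2 * L')^-1 * \sum_(j in T) (('C(w j, h) * 'C(S - w j, s - h))%:R +
    ('C(w j, s - h) * 'C(S - w j, h))%:R) / ('C(S, s) * 'C(s, h))%:R.
Proof.
move=> le_hs le_sS.
rewrite (sum_profile_nu _ _ (addn h)); congr (_ * _); apply: eq_bigr => j _.
rewrite /profile_mass; under eq_bigr do rewrite mulrDr.
rewrite big_split /= !sum_shift_mul_delta ?leq_subr //.
by rewrite subKn // mulrDl [in X in _ + X]mulnC.
Qed.

Lemma lp_obj_profile_nu : (0 < S)%N ->
  lp_obj S profile_nu = (S%:R * L')^-1 * \sum_(j in T) (maxn (w j) (S - w j))%:R.
Proof.
move=> S_gt0.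
rewrite lp_objE (sum_profile_nu _ _ id); under eq_bigr => j _.
  rewrite /profile_mass; under eq_bigr do rewrite mulrDr.
  rewrite big_split /= !sum_mul_delta ?leq_subr // !lp_coef_div_bin ?leq_subr //.
  rewrite subKn // (maxnC (S - w j)%N) -mulr2n.
  over.
rewrite /= sumrMnl -mulr_suml -mulr_natr; field.
by rewrite lt0r_neq0 ?pnatr_eq0 -?lt0n.
Qed.

End Profile.

Lemma exists_le_mean (R : realDomainType) (n : nat) (F : 'I_n -> R) (c : R) :
  (0 < n)%N -> \sum_i F i <= n%:R * c -> exists i, F i <= c.
Proof.
move=> n_gt0 le_sum.
have [/existsP // | /existsPn lt_all] := boolP [exists i, F i <= c].
suff : n%:R * c < \sum_i F i by rewrite ltNge le_sum.
rewrite mulr_natl -[in c *+ n](card_ord n) -sumr_const.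
apply: ltr_sum => [|i _]; last by rewrite ltNge lt_all.
by apply/hasP; exists (Ordinal n_gt0); rewrite ?mem_index_enum.
Qed.

Section Keys.
Variables (R : realFieldType) (L S s : nat) (a : 'I_L -> 'I_L -> bool) (L' : R).
Variables (T : {set 'I_L}) (ks : 'I_S -> 'I_L).
Hypothesis le_sS : (s <= S)%N.
Hypothesis L'_gt0 : 0 < L'.
Hypothesis ks_inj : injective ks.
Hypothesis card_Aset_le : forall (ks' : 'I_s -> 'I_L) (b : 'I_s -> bool),
  injective ks' -> (#|Aset a ks' b|)%:R <= L' / 2 ^+ s.

Local Notation w := (fun j => #|ones_at a ks j|).

Let w_le j : (w j <= S)%N.
Proof. by rewrite -[X in (_ <= X)%N](card_ord S) max_card. Qed.

Lemma profile_feasible : lp_feasible S s (#|T|%:R / L') (profile_nu S T w L').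
Proof.
split=> [t _ | t | | h le_hs].
- exact: profile_nu_ge0.
- exact: profile_nu_sym.
- exact: sum_bin_profile_nu.
- rewrite sum_shift_profile_nu // -mulr_suml big_split /=.
  have bound1 := sum_bin_ones_at_le ks_inj card_Aset_le T le_hs.
  have := sum_bin_ones_at_le ks_inj card_Aset_le T (leq_subr h s).
  rewrite subKn // bin_sub // => bound2.
  set D := ('C(S, s) * 'C(s, h))%:R in bound1 bound2 *.
  have D_gt0 : 0 < D by rewrite ltr0n muln_gt0 !bin_gt0 le_sS.
  have -> : 1 / 2 ^+ s = (2 * L')^-1 * (2 * (L' / 2 ^+ s)).
    by field; rewrite expf_neq0 ?pnatr_eq0 ?lt0r_neq0.
  rewrite ler_pM2l ?invr_gt0 ?mulr_gt0 // ler_pdivrMr //.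
  rewrite (_ : _ * D = D * (L' / 2 ^+ s) + D * (L' / 2 ^+ s)); last by ring.
  exact: lerD.
Qed.

Lemma sum_ncorrect_le (g : 'I_L -> bool) :
  (\sum_i ncorrect a T g (ks i) <= \sum_(j in T) maxn (w j) (S - w j))%N.
Proof.
rewrite /ncorrect (exchange_sum_card (fun i j => (j \in T) && (g j == a (ks i) j))).
rewrite [leqRHS]big_mkcond /=; apply: leq_sum => j _.
case: (j \in T) => /=; last by rewrite card_set_sum big1.
case: (g j).
  by apply: leq_trans (leq_maxl _ _); rewrite subset_leq_card //; apply/subsetP => i; rewrite !inE.
apply: leq_trans (leq_maxr _ _).
rewrite -[X in (_ <= X - _)%N](card_ord S) -(cardsC (ones_at a ks j)) addKn.
by rewrite subset_leq_card //; apply/subsetP => i; rewrite !inE; case: (a (ks i) j).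
Qed.

Lemma exists_ncorrect_le (g : 'I_L -> bool) (nustar : R) : (0 < S)%N ->
  (forall nu, lp_feasible S s (#|T|%:R / L') nu -> lp_obj S nu <= nustar) ->
  exists i, (ncorrect a T g (ks i))%:R <= nustar * L'.
Proof.
move=> S_gt0 /(_ _ profile_feasible); rewrite lp_obj_profile_nu // => obj_le.
apply: exists_le_mean => //.
apply: le_trans (_ : _ <= (\sum_(j in T) maxn (w j) (S - w j))%:R) _.
  by rewrite -natr_sum ler_nat sum_ncorrect_le.
by move: obj_le; rewrite ler_pdivrMl ?mulr_gt0 ?ltr0n // natr_sum -mulrA [L' * _]mulrC.
Qed.

End Keys.

Theorem corollary2 (R : realFieldType) (L : nat) (a : 'I_L -> 'I_L -> bool)
  (s S : nat) (W : R) (gamma nustar : R) :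
  (0 < L)%N -> (2 <= s)%N -> (s <= S)%N -> 0 <= W ->
  (forall (ks : 'I_s -> 'I_L) (b : 'I_s -> bool), injective ks ->
      (#|Aset a ks b|)%:R <= L%:R / 2 ^+ s + W) ->
  0 < gamma -> gamma < 1 ->
  lp_optimal S s (gamma * L%:R / (L%:R + 2 ^+ s * W)) nustar ->
  forall (T : {set 'I_L}) (g : 'I_L -> bool),
    (#|T|)%:R = gamma * L%:R ->
    (forall ks : 'I_S -> 'I_L, injective ks ->
       exists i : 'I_S, (ncorrect a T g (ks i))%:R <= nustar * (L%:R + 2 ^+ s * W))
    /\ (#|[set k : 'I_L | (nustar * (L%:R + 2 ^+ s * W) < (ncorrect a T g k)%:R)%R]| < S)%N.
Proof.
move=> L_gt0 le_2s le_sS W_ge0 card_Aset_le _ _ [_ nustar_ub] T g card_T.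
set L' := L%:R + 2 ^+ s * W.
have L'_gt0 : 0 < L' by rewrite ltr_wpDr ?mulr_ge0 ?exprn_ge0 ?ltr0n.
have card_Aset_le' (ks : 'I_s -> 'I_L) (b : 'I_s -> bool) :
    injective ks -> (#|Aset a ks b|)%:R <= L' / 2 ^+ s.
  move=> /(card_Aset_le _ b); rewrite (_ : _ + W = L' / 2 ^+ s) //.
  by rewrite /L'; field; rewrite expf_neq0 ?pnatr_eq0.
rewrite -card_T in nustar_ub.
have S_gt0 : (0 < S)%N by apply: leq_trans le_sS; apply: leq_trans le_2s.
have good_key (ks : 'I_S -> 'I_L) :
    injective ks -> exists i, (ncorrect a T g (ks i))%:R <= nustar * L'.
  move=> ks_inj.
  exact: exists_ncorrect_le le_sS L'_gt0 ks_inj card_Aset_le' g nustar S_gt0 nustar_ub.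
split=> //; rewrite ltnNge; apply/negP => le_S_bad.
pose ks (i : 'I_S) := enum_val (widen_ord le_S_bad i).
have [|i] := good_key ks.
  by move=> i j /enum_val_inj /(congr1 val) /= /val_inj.
by have := enum_valP (widen_ord le_S_bad i); rewrite inE => /lt_geF ->.
Qed.
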